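(* For $n\ge2$ let $\mathcal{V}_n$ be the arc diagram with $\mathbf{Z}=\{Z_1,\dots,Z_n\}$, $\mathbf{a}=\{a_1,\dots,a_{2n-2}\}$, where $a_1\in Z_1$, $a_{2n-2}\in Z_n$, and $a_{2i},a_{2i+1}\in Z_{i+1}$ for $i=1,\dots,n-2$, with matching $M(a_{2i-1})=M(a_{2i})=i$ for $i=1,\dots,n-1$. Then the differential on the algebra $\mathcal{A}(\mathcal{V}_n)$ is identically zero.
   Context: Strands algebra $\mathcal{A}(n,k)$: the $\mathbb{F}_2$-vector space with basis triples $(S,T,\phi)$, $S,T\subset\{1,\dots,n\}$ of size $k$, $\phi\colon S\to T$ a bijection with $\phi(i)\ge i$; product $(S,T,\phi)(U,V,\psi)=(S,V,\psi\circ\phi)$ if $T=U$ and $\mathrm{inv}(\phi)+\mathrm{inv}(\psi)=\mathrm{inv}(\psi\circ\phi)$, else $0$ (inv = number of pairs $i<j$ with $\phi(i)>\phi(j)$); differential: sum over inversions of the generators obtained by swapping the two images, keeping those with inversion number one less. For an arc diagram $\mathcal{Z}=(\mathbf{Z},\mathbf{a},M)$ with $2k$ points, the extended strands algebra $\mathcal{A}(|Z_1|,\dots,|Z_l|)=\bigoplus\mathcal{A}(|Z_1|,k_1)\otimes\cdots\otimes\mathcal{A}(|Z_l|,k_l)$ ($|Z_j|$ = number of points of $\mathbf{a}$ on $Z_j$; strands stay within segments, differential by the Leibniz rule). For $s\subset\{1,\dots,k\}$ of size $i$: sections $S\subset M^{-1}(s)$ with $M|_S$ bijective onto $s$, $I(s)=\sum_S(S,S,\mathrm{id})$,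 $I=\sum_{|s|=i}I(s)$; for a bijection $\psi\colon S\to T$ ($S,T\subset\{1,\dots,2k\}$) with $\psi(x)>x$, $a_i(S,T,\psi)=\sum_U(S\cup U,T\cup U,\psi\cup\mathrm{id}_U)$ over $U$ disjoint from $S\cup T$ with $|S\cup U|=i$. $\mathcal{A}(\mathcal{Z},i)$ is the subalgebra of $\mathcal{A}(|Z_1|,\dots,|Z_l|)$ generated by the $I(s)$ and all $I\,a_i(S,T,\psi)\,I$, and $\mathcal{A}(\mathcal{Z})=\bigoplus_{i=0}^k\mathcal{A}(\mathcal{Z},i)$. *)

From mathcomp Require Import all_boot.
Set Implicit Arguments. Unset Strict Implicit. Unset Printing Implicit Defensive.

(* Generic arc diagram data: N = 2k points {0,..,N-1} (0-based a_1..a_N),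
   seg p = index of the segment Z_j containing p (segments are consecutive
   blocks of points), M : points -> {0,..,k-1} the matching. *)
Section Strands.
Variables (N k : nat) (seg : 'I_N -> nat) (M : 'I_N -> 'I_k).

(* A generator (S,T,phi) is a partial map 'I_N -> option 'I_N:
   S = support, T = image, phi = the map. *)
Definition gen := {ffun 'I_N -> option 'I_N}.

Definition supp (f : gen) : {set 'I_N} := [set x | f x != None].
Definition img (f : gen) : {set 'I_N} := [set y | [exists x, f x == Some y]].

Definition valid_gen (f : gen) : bool :=
  [forall x, forall y, ((f x != None) && (f x == f y)) ==> (x == y)] &&
  [forall x, if f x is Some y then (x <= y) && (seg y == seg x) else true].

Definition strict_gen (f : gen) : bool :=
  [forall x, forall y, ((f x != None) && (f x == f y)) ==> (x == y)] &&
  [forall x, if f x is Some y then (x < y) && (seg y == seg x) else true].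

Definition is_inv (f : gen) (p : 'I_N * 'I_N) : bool :=
  (p.1 < p.2) &&
  (match f p.1, f p.2 with Some a, Some b => b < a | _, _ => false end).

Definition inv (f : gen) : nat := #|[set p | is_inv f p]|.

Definition comp (f g : gen) : gen :=
  [ffun x => match f x with Some y => g y | None => None end].

(* product of generators; None means 0 *)
Definition gmul (f g : gen) : option gen :=
  if (img f == supp g) && (inv f + inv g == inv (comp f g))
  then Some (comp f g) else None.

(* F2-vector space with basis gen: an element is the finite set of basis
   vectors with coefficient 1. *)
Definition elt := {set gen}.

Definition add (x y : elt) : elt := (x :|: y) :\: (x :&: y).

Definition mul (x y : elt) : elt :=
  [set h | odd #|[set p in setX x y | gmul p.1 p.2 == Some h]|].

Definition swap (f : gen) (i j : 'I_N) : gen :=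
  [ffun x => if x == i then f j else if x == j then f i else f x].

Definition dgen (f : gen) : elt :=
  [set g | odd #|[set p | is_inv f p && (swap f p.1 p.2 == g)]|
           && (inv g + 1 == inv f)].

Definition d (x : elt) : elt := [set g | odd #|[set f in x | g \in dgen f]|].

Definition idgen (S : {set 'I_N}) : gen :=
  [ffun x => if x \in S then Some x else None].

Definition is_section (s : {set 'I_k}) (S : {set 'I_N}) : bool :=
  ([set M x | x in S] == s) && (#|S| == #|s|).

Definition Iset (s : {set 'I_k}) : elt := [set idgen S | S in is_section s].

Definition Ibig (i : nat) : elt :=
  [set g | odd #|[set s : {set 'I_k} | (#|s| == i) && (g \in Iset s)]|].

Definition ext (f : gen) (U : {set 'I_N}) : gen :=
  [ffun x => if x \in U then Some x else f x].

Definition agen (i : nat) (f : gen) : elt :=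
  [set ext f U | U in [set U : {set 'I_N} |
       [disjoint U & supp f :|: img f] && (#|supp f :|: U| == i)]].

Inductive inAZi (i : nat) : elt -> Prop :=
| AZ0 : inAZi i set0
| AZI (s : {set 'I_k}) : #|s| = i -> inAZi i (Iset s)
| AZa f : strict_gen f -> inAZi i (mul (mul (Ibig i) (agen i f)) (Ibig i))
| AZadd x y : inAZi i x -> inAZi i y -> inAZi i (add x y)
| AZmul x y : inAZi i x -> inAZi i y -> inAZi i (mul x y).

Inductive inAZ : elt -> Prop :=
| AZsum0 : inAZ set0
| AZsumS i x y : i <= k -> inAZi i x -> inAZ y -> inAZ (add x y).

End Strands.

(* The arc diagram V_n: N = 2n-2 points, 0-based point p = a_(p+1).
   Segment (0-based) of p is (p+1)/2, matching M(p) = p/2 (0-based). *)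
Definition Vseg (n : nat) (p : 'I_((n.-1).*2)) : nat := uphalf p.

Lemma V_half_lt n (p : 'I_((n.-1).*2)) : p./2 < n.-1.
Proof. by rewrite ltn_half_double. Qed.

Definition VM (n : nat) (p : 'I_((n.-1).*2)) : 'I_(n.-1) := Ordinal (V_half_lt p).

From Pilot Require Import Defs.
From mathcomp Require Import all_boot.
Set Implicit Arguments. Unset Strict Implicit. Unset Printing Implicit Defensive.

(* The differential on A(V_n) vanishes because no element of A(V_n) involves
   a generator with an inversion.

   Call a generator upward if every strand x -> y satisfies x <= y and stays
   inside its segment.  For an arbitrary arc diagram, the generators I(s) and
   a_i(S,T,psi) are upward and upward generators are closed under composition,
   so every element of A(Z) is a sum of upward generators.  If all segments are
   narrow (two points of one segment are at distance at most 1), an upward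
   generator has no inversion: from p1 < p2 <= phi(p2) < phi(p1) we get
   phi(p1) >= p1 + 2, so phi(p1) leaves the segment of p1.  The differential of
   a generator is a sum over its inversions, hence d vanishes on elements built
   from inversion-free generators.  The segments of V_n have at most two
   consecutive points, which gives the theorem. *)

Lemma odd_card_witness (T : finType) (A : {set T}) : odd #|A| -> exists a, a \in A.
Proof.
by move=> oddA; apply/set0Pn; apply: contraTneq oddA => ->; rewrite cards0.
Qed.

Section Upward.
Variables (N k : nat) (seg : 'I_N -> nat) (M : 'I_N -> 'I_k).

Definition upward (g : gen N) : Prop :=
  forall x y, g x = Some y -> (x <= y) && (seg y == seg x).

Definition upward_elt (X : elt N) : Prop := forall g, g \in X -> upward g.

Lemma upward_elt0 : upward_elt set0.
Proof. by move=> g; rewrite inE. Qed.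

Lemma upward_add x y : upward_elt x -> upward_elt y -> upward_elt (Defs.add x y).
Proof.
by move=> ux uy g; rewrite !inE => /andP[_ /orP[/ux | /uy]].
Qed.

Lemma upward_comp f g : upward f -> upward g -> upward (Defs.comp f g).
Proof.
move=> uf ug a c; rewrite ffunE.
case fa: (f a) => [b|] // gb.
have /andP[ab /eqP sab] := uf _ _ fa; have /andP[bc /eqP sbc] := ug _ _ gb.
by rewrite (leq_trans ab bc) sbc sab eqxx.
Qed.

Lemma upward_mul x y : upward_elt x -> upward_elt y -> upward_elt (Defs.mul x y).
Proof.
move=> ux uy h; rewrite inE => /odd_card_witness [[f g]].
rewrite !inE /= => /andP[/andP[fx gy] /eqP].
rewrite /gmul; case: ifP => // _ [<-].
exact: upward_comp (ux _ fx) (uy _ gy).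
Qed.

Lemma upward_idgen S : upward (idgen S).
Proof. by move=> a c; rewrite ffunE; case: ifP => // _ [<-]; rewrite leqnn eqxx. Qed.

Lemma upward_Iset s : upward_elt (Iset M s).
Proof. by move=> g /imsetP [S _ ->]; apply: upward_idgen. Qed.

Lemma upward_Ibig i : upward_elt (Ibig M i).
Proof.
move=> g; rewrite inE => /odd_card_witness [s].
by rewrite inE => /andP[_ /upward_Iset].
Qed.

Lemma upward_agen i f : strict_gen seg f -> upward_elt (agen i f).
Proof.
move=> /andP[_ /forallP sf] h /imsetP [U _ ->] a c; rewrite ffunE.
case: ifP => _; first by case=> <-; rewrite leqnn eqxx.
by move=> fa; have := sf a; rewrite fa => /andP[/ltnW -> ->].
Qed.

Lemma upward_AZi i x : inAZi seg M i x -> upward_elt x.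
Proof.
elim=> {x}.
- exact: upward_elt0.
- by move=> s _; apply: upward_Iset.
- move=> f sf; apply: upward_mul; last exact: upward_Ibig.
  by apply: upward_mul; [apply: upward_Ibig | apply: upward_agen].
- by move=> ? ? _ ? _; apply: upward_add.
- by move=> ? ? _ ? _; apply: upward_mul.
Qed.

Lemma upward_AZ x : inAZ seg M x -> upward_elt x.
Proof.
elim=> {x} [|i x y _ /upward_AZi ux _ uy]; first exact: upward_elt0.
exact: upward_add.
Qed.

Hypothesis narrow : forall x y : 'I_N, x.+2 <= y -> seg y != seg x.

Lemma upward_no_inv f p : upward f -> is_inv f p = false.
Proof.
move=> uf; case: p => p1 p2; rewrite /is_inv /=.
case: ltnP => //= p12.
case f1: (f p1) => [a|] //; case f2: (f p2) => [b|] //.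
apply/negP => ba.
have /andP[_ sa] := uf _ _ f1; have /andP[p2b _] := uf _ _ f2.
have p1a : p1.+2 <= a by apply: leq_ltn_trans ba; apply: leq_trans p2b.
by move: (narrow p1a); rewrite sa.
Qed.

End Upward.

Lemma dgen_no_inv N (f : gen N) : (forall p, is_inv f p = false) -> dgen f = set0.
Proof.
move=> noinv; apply/setP => g; rewrite !inE.
suff -> : [set p | is_inv f p && (swap f p.1 p.2 == g)] = set0 by rewrite cards0.
by apply/setP => p; rewrite !inE noinv.
Qed.

Lemma d_no_inv N (x : elt N) :
  (forall f, f \in x -> forall p, is_inv f p = false) -> d x = set0.
Proof.
move=> noinv; apply/setP => g; rewrite !inE.
suff -> : [set f in x | g \in dgen f] = set0 by rewrite cards0.
apply/setP => f; rewrite in_set in_set0.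
case fx: (f \in x) => //=.
by rewrite dgen_no_inv ?in_set0 // => p; apply: noinv.
Qed.

(* The segments of V_n are {a_1}, {a_2, a_3}, ..., {a_(2n-2)}: narrow. *)
Lemma Vseg_narrow n (x y : 'I_((n.-1).*2)) : x.+2 <= y -> Vseg y != Vseg x.
Proof.
by move=> /uphalf_leq xy; rewrite /Vseg; apply: contraTneq xy => ->; rewrite /= ltnn.
Qed.

Theorem mainTheorem4 (n : nat) : 2 <= n ->
  forall x : elt ((n.-1).*2),
    inAZ (@Vseg n) (@VM n) x -> d x = set0.
Proof.
move=> _ x /upward_AZ ux; apply: d_no_inv => f /ux uf p.
by apply: upward_no_inv uf => y z; apply: Vseg_narrow.
Qed.
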